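(* Let $\hbar>0$, let $N\ge1$ and times $t_1<t_2<\dots<t_N<t_{N+1}\equiv t_D$. Consider two arms $\gamma\in\{\alpha,\beta\}$ with data, for $i=1,\dots,N$: masses $m_{\gamma i}>0$, wave vectors $k_{\gamma i}\in\mathbb{R}^3$ (possibly zero), frequencies $\omega_{\gamma i}\in\mathbb{R}$ and laser phases $\varphi_{\gamma i}\in\mathbb{R}$, and initial data $(q_{\gamma 1},p_{\gamma 1})\in\mathbb{R}^3\times\mathbb{R}^3$. Define recursively, for $i=1,\dots,N$, $(q_{\gamma,i+1},p_{\gamma,i+1})$ as the position and momentum at time $t_{i+1}$ of the classical trajectory of mass $m_{\gamma i}$ (Hamiltonian $H_{m_{\gamma i}}$ of the context) which is at $(q_{\gamma i},p_{\gamma i}+\hbar k_{\gamma i})$ at time $t_i$; write $q_{\gamma D}=q_{\gamma,N+1}$, $p_{\gamma D}=p_{\gamma,N+1}$, and $S_{\gamma i}=S_{cl}(t_{i+1},t_i,q_{\gamma i},p_{\gamma i}+\hbar k_{\gamma i},m_{\gamma i})$. Let $X_D,Y_D$ be complex $3\times 3$ matrices with $X_D$ invertible, and let $\Delta\phi(q,t_D)=\Phi_\beta(q)-\Phi_\alpha(q)$ with $\Phi_\gamma$ as in the context. Then for every $q\in\mathbb{R}^3$, \[ \begin{aligned} \Delta\phi(q,t_D)={}&(p_{\beta D}-p_{\alpha D})\cdot\Big(q-\frac{q_{\alpha D}+q_{\beta D}}{2}\Big)/\hbar-\frac{p_{\alpha 1}+p_{\beta 1}}{2\hbar}\cdot(q_{\beta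 1}-q_{\alpha 1})\\ &+\sum_{i=1}^N\Big[(k_{\beta i}-k_{\alpha i})\cdot\frac{q_{\alpha i}+q_{\beta i}}{2}-(\omega_{\beta i}-\omega_{\alpha i})\,t_i-(\varphi_{\beta i}-\varphi_{\alpha i})\Big]\\ &+\sum_{i=1}^N\Big(\frac{m_{\beta i}}{m_{\alpha i}}-1\Big)\Big[\frac{S_{\alpha i}}{\hbar}+\frac{p_{\alpha,i+1}}{2\hbar}\cdot(q_{\beta,i+1}-q_{\alpha,i+1})-\frac{p_{\alpha i}+\hbar k_{\alpha i}}{2\hbar}\cdot(q_{\beta i}-q_{\alpha i})\Big]\\ &+\frac{m_{\beta N}}{2\hbar}(q-q_{\beta D})\cdot\mathrm{Re}(Y_DX_D^{-1})(q-q_{\beta D})-\frac{m_{\alpha N}}{2\hbar}(q-q_{\alpha D})\cdot\mathrm{Re}(Y_DX_D^{-1})(q-q_{\alpha D}). \end{aligned} \]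
   Context: For a particle of mass $m>0$ with position $q\in\mathbb{R}^3$ and momentum $p\in\mathbb{R}^3$, the external Hamiltonian is \[ H_m(q,p,t)=\frac{1}{2m}\,p\cdot G(t)\,p-\frac{m}{2}\,q\cdot\Gamma(t)\,q-\Omega(t)\cdot(q\times p)-m\,g(t)\cdot q, \] with $G(t)$ continuous real symmetric invertible $3\times3$ matrices, $\Gamma(t)$ continuous real symmetric $3\times3$ matrices, $\Omega(t),g(t)\in\mathbb{R}^3$ continuous, the same for all masses. Classical trajectories solve Hamilton's equations for $H_m$, and $S_{cl}(s',s,q_0,p_0,m)=\int_s^{s'}(p\cdot\dot q-H_m)\,dt$ along the classical trajectory of mass $m$ starting at $(q_0,p_0)$ at time $s$. Model of the interferometer (Gaussian wave packets, beam splitters acting as the factor $e^{-i(\omega t_i-k\cdot q_{i}+\varphi)}$ at the interaction point $(t_i,q_i)$ and imparting momentum $\hbar k$, common complex width parameters $X_D,Y_D$ at detection): the output phase of arm $\gamma$ at position $q$ and time $t_D$ is \[ \Phi_\gamma(q)=\sum_{i=1}^N\Big[\frac{S_{\gamma i}}{\hbar}+k_{\gamma i}\cdot q_{\gamma i}-\omega_{\gamma i}t_i-\varphi_{\gamma i}\Big]+\frac{p_{\gamma D}\cdot(q-q_{\gamma D})}{\hbar}+\frac{m_{\gamma N}}{2\hbar}(q-q_{\gamma D})\cdot\mathrm{Re}(Y_DX_D^{-1})(q-q_{\gamma D}), \] and $\Delta\phi(q,t_D)=\Phi_\beta(q)-\Phi_\alpha(q)$ is the interferometer phase shift. A dot denotes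 the Euclidean inner product; $\mathrm{Re}$ is the entrywise real part. *)

From HB Require Import structures.
From mathcomp Require Import all_boot all_order all_algebra.
From mathcomp Require Import all_classical all_reals all_analysis.
From mathcomp Require Import complex.
Set Implicit Arguments. Unset Strict Implicit. Unset Printing Implicit Defensive.
Import Order.TTheory GRing.Theory Num.Theory.
Import numFieldNormedType.Exports.
Local Open Scope classical_set_scope.
Local Open Scope ring_scope.

Section Defs.
Variable R : realType.
Local Notation vec := 'cV[R]_3.
Local Notation mat := 'M[R]_3.

Definition dotv (u v : vec) : R := \sum_(i < 3) u i 0 * v i 0.

Definition crossv (u v : vec) : vec :=
  \col_(i < 3)
    (if i == 0 :> nat then u 1 0 * v 2%:R 0 - u 2%:R 0 * v 1 0
     else if i == 1 :> nat then u 2%:R 0 * v 0 0 - u 0 0 * v 2%:R 0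
     else u 0 0 * v 1 0 - u 1 0 * v 0 0).

Definition Ham (G Gam : R -> mat) (Om g : R -> vec) (m : R)
  (q p : vec) (t : R) : R :=
  (2 * m)^-1 * dotv p (G t *m p) - m / 2 * dotv q (Gam t *m q)
  - dotv (Om t) (crossv q p) - m * dotv (g t) q.

(* (q,p) : R -> R^3 x R^3 solves Hamilton's equations for H_m on all of R:
   dq/dt = grad_p H_m and dp/dt = - grad_q H_m, the gradients being
   expressed through directional derivatives along every v. *)
Definition hamilton_sol (G Gam : R -> mat) (Om g : R -> vec) (m : R)
  (q p : R -> vec) : Prop :=
  forall t : R,
    derivable q t 1 /\ derivable p t 1 /\
    forall v : vec,
      is_derive (p t) v (fun p' => Ham G Gam Om g m (q t) p' t)
                (dotv ('D_1 q t) v) /\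
      is_derive (q t) v (fun q' => Ham G Gam Om g m q' (p t) t)
                (- dotv ('D_1 p t) v).

Definition action (G Gam : R -> mat) (Om g : R -> vec) (m : R)
  (q p : R -> vec) (s s' : R) : R :=
  \int[lebesgue_measure]_(t in `[s, s']) (dotv (p t) ('D_1 q t)
                                           - Ham G Gam Om g m (q t) (p t) t).

(* Output phase of one arm (context formula).  Indices i = 1..N;
   qs i, ps i = (q_{gamma i}, p_{gamma i}), qs N.+1 = q_{gamma D}, etc.;
   S i = S_{gamma i}; Z = Re(Y_D X_D^{-1}). *)
Definition Phi (hbar : R) (N : nat) (t : nat -> R) (m : nat -> R)
  (k : nat -> vec) (om ph : nat -> R) (qs ps : nat -> vec) (S : nat -> R)
  (Z : mat) (q : vec) : R :=
  \sum_(1 <= i < N.+1) (S i / hbar + dotv (k i) (qs i) - om i * t i - ph i)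
  + dotv (ps N.+1) (q - qs N.+1) / hbar
  + m N / (2 * hbar) * dotv (q - qs N.+1) (Z *m (q - qs N.+1)).

Definition ReYXinv (X Y : 'M[R[i]]_3) : mat :=
  map_mx (@complex.Re R) (Y *m invmx X).

End Defs.

From HB Require Import structures.
From mathcomp Require Import all_boot all_order all_algebra.
From mathcomp Require Import all_classical all_reals all_analysis.
From mathcomp Require Import complex.
From mathcomp Require Import ring.
Import Order.TTheory GRing.Theory Num.Theory.
Import numFieldNormedType.Exports.
Local Open Scope classical_set_scope.
Local Open Scope ring_scope.

(* Write H_m(q, p, t) = m h(q, p/m, t) with h quadratic.  For two solutions of
   Hamilton's equations with masses m_a, m_b, the pairing
     W = 1/2 ((m_a/m_b) p_b + p_a) . (q_b - q_a)
   then satisfies W' = (m_a/m_b) L_b - L_a, where L = p . dq/dt - H_m is the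
   Lagrangian along the trajectory.  Integrating over [t_i, t_(i+1)] expresses
   S_(beta i) through S_(alpha i) and the values of W at the ends.  Inserted into
   Phi_beta - Phi_alpha, the boundary terms (p_alpha + p_beta) . (q_beta - q_alpha) / 2hbar
   telescope over i, which leaves the stated formula. *)

Lemma is_derive_quadratic {R : realFieldType} {V : normedModType R} (f : V -> R)
    {a v : V} {A B : R} :
  (forall h : R, f (h *: v + a) = f a + h * A + h ^+ 2 * B) ->
  is_derive a v f A.
Proof.
move=> fE.
have quotientE : {near (0 : R)^', (fun h : R => A + h * B) =1
    (fun h : R => h^-1 *: ((f \o shift a) (h *: v) - f a))}.
  near=> h; rewrite /= /shift fE.
  have h0 : h != 0 by near: h; exact: nbhs_dnbhs_neq.
  by rewrite /GRing.scale /= expr2; field.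
have lim_affine : (fun h : R => A + h * B) @ 0^' --> A.
  have : {for 0, continuous (fun h : R => A + h * B)}.
    apply: continuousD; first exact: cvg_cst.
    by apply: continuousM; [exact: cvg_id | exact: cvg_cst].
  by move/continuous_withinNx; rewrite mul0r addr0.
have lim_quotient :
    (fun h : R => h^-1 *: ((f \o shift a) (h *: v) - f a)) @ 0^' --> A.
  exact: cvg_trans (near_eq_cvg quotientE) lim_affine.
by apply: DeriveDef; [exact: cvgP lim_quotient | exact: cvg_lim].
Unshelve. all: by end_near.
Qed.

Section Coordinates.
Context {R : realType}.
Local Notation vec := 'cV[R]_3.

Lemma sum3 (F : 'I_3 -> R) : \sum_(i < 3) F i = F 0 + F 1 + F 2%:R.
Proof.
rewrite !big_ord_recl big_ord0 addr0 addrA; congr (_ + F _ + F _); exact/val_inj.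
Qed.

Lemma crossv_coord0 (u v : vec) : crossv u v 0 0 = u 1 0 * v 2%:R 0 - u 2%:R 0 * v 1 0.
Proof. by rewrite mxE. Qed.

Lemma crossv_coord1 (u v : vec) : crossv u v 1 0 = u 2%:R 0 * v 0 0 - u 0 0 * v 2%:R 0.
Proof. by rewrite mxE. Qed.

Lemma crossv_coord2 (u v : vec) : crossv u v 2%:R 0 = u 0 0 * v 1 0 - u 1 0 * v 0 0.
Proof. by rewrite mxE. Qed.

End Coordinates.

Ltac coordinates :=
  rewrite /Ham /dotv ?(sum3, crossv_coord0, crossv_coord1, crossv_coord2, mxE).

Section Vector_calculus.
Context {R : realType}.
Local Notation vec := 'cV[R]_3.

Lemma dotvC (u v : vec) : dotv u v = dotv v u.
Proof. by apply: eq_bigr => i _; rewrite mulrC. Qed.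

Lemma dotvDl (u w v : vec) : dotv (u + w) v = dotv u v + dotv w v.
Proof. by rewrite /dotv -big_split; apply: eq_bigr => i _; rewrite mxE mulrDl. Qed.

Lemma dotvBl (u w v : vec) : dotv (u - w) v = dotv u v - dotv w v.
Proof. by rewrite /dotv -sumrB; apply: eq_bigr => i _; rewrite !mxE mulrBl. Qed.

Lemma dotvZl c (u v : vec) : dotv (c *: u) v = c * dotv u v.
Proof. by rewrite /dotv mulr_sumr; apply: eq_bigr => i _; rewrite mxE mulrA. Qed.

Lemma phase_step_regroup {h ma mb Sa Sb oa ob fa fb s : R}
    {qa pa ka qb pb kb qa' pa' qb' pb' : vec} :
  h != 0 -> ma != 0 -> mb != 0 ->
  (ma / mb) * Sb - Sa = 2^-1 * dotv ((ma / mb) *: pb' + pa') (qb' - qa')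
    - 2^-1 * dotv ((ma / mb) *: (pb + h *: kb) + (pa + h *: ka)) (qb - qa) ->
  (Sb / h + dotv kb qb - ob * s - fb) - (Sa / h + dotv ka qa - oa * s - fa)
  = (dotv (kb - ka) (2^-1 *: (qa + qb)) - (ob - oa) * s - (fb - fa))
    + (mb / ma - 1) * (Sa / h + dotv ((2 * h)^-1 *: pa') (qb' - qa')
                       - dotv ((2 * h)^-1 *: (pa + h *: ka)) (qb - qa))
    + (dotv ((2 * h)^-1 *: (pa' + pb')) (qb' - qa')
       - dotv ((2 * h)^-1 *: (pa + pb)) (qb - qa)).
Proof.
move=> h0 ma0 mb0 E.
have -> : Sb = (mb / ma) * (Sa + ((ma / mb) * Sb - Sa)) by field; rewrite ma0 mb0.
by rewrite E; coordinates; field; rewrite h0 ma0 mb0.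
Qed.

Lemma phase_difference_regroup {h Sb Sa SA SM ZB ZA : R}
    {pbD paD qbD qaD pb1 pa1 qb1 qa1 q : vec} :
  h != 0 ->
  Sb - Sa = SA + SM + (dotv ((2 * h)^-1 *: (paD + pbD)) (qbD - qaD)
                       - dotv ((2 * h)^-1 *: (pa1 + pb1)) (qb1 - qa1)) ->
  (Sb + dotv pbD (q - qbD) / h + ZB) - (Sa + dotv paD (q - qaD) / h + ZA)
  = dotv (pbD - paD) (q - 2^-1 *: (qaD + qbD)) / h
    - dotv ((2 * h)^-1 *: (pa1 + pb1)) (qb1 - qa1) + SA + SM + ZB - ZA.
Proof.
move=> h0 E; have -> : Sb = Sa + (Sb - Sa) by ring.
by rewrite E; coordinates; field.
Qed.

Lemma is_derive_coord {m n} {u : R -> 'M[R]_(m, n)} {t : R} {du} i j :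
  is_derive t (1 : R) u du -> is_derive t (1 : R) (fun x => u x i j) (du i j).
Proof.
move=> ud; apply: DeriveDef.
  exact: (derivable_mxP u t 1).1 ex_derive i j.
by rewrite -[du]derive_val derive_mx ?mxE //; exact: ex_derive.
Qed.

Lemma is_derive_dotv {u w : R -> vec} {t : R} {du dw} :
  is_derive t (1 : R) u du -> is_derive t (1 : R) w dw ->
  is_derive t (1 : R) (fun x => dotv (u x) (w x)) (dotv du (w t) + dotv (u t) dw).
Proof.
move=> ud wd.
have -> : (fun x => dotv (u x) (w x)) =
    \sum_(i < 3) ((fun x => u x i 0) * (fun x => w x i 0)) by rewrite fct_sumE.
apply: is_derive_eq.
  apply: is_derive_sum => i.
  exact: is_deriveM (is_derive_coord i 0 ud) (is_derive_coord i 0 wd).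
rewrite /dotv -big_split; apply: eq_bigr => i _ /=.
by rewrite /GRing.scale /= addrC; congr (_ + _); rewrite mulrC.
Qed.

Definition continuous_coords_at {m n} (u : R -> 'M[R]_(m, n)) x :=
  forall i j, {for x, continuous (fun y => u y i j)}.

Lemma continuous_coords {m n} {u : R -> 'M[R]_(m, n)} {x} :
  {for x, continuous u} -> continuous_coords_at u x.
Proof.
move=> cu i j.
exact: (continuous_comp (g := fun M : 'M[R]_(m, n) => M i j) cu
                        (@coord_continuous R m n i j (u x))).
Qed.

Lemma continuous_sum I (r : seq I) (F : I -> R -> R) x :
  (forall i, {for x, continuous (F i)}) ->
  {for x, continuous (fun y => \sum_(i <- r) F i y)}.
Proof. by move=> cF; apply: cvg_big => //; [exact: add_continuous | move=> i _; exact: cF]. Qed.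

Lemma continuous_dotv {u w : R -> vec} {x} :
  continuous_coords_at u x -> continuous_coords_at w x ->
  {for x, continuous (fun y => dotv (u y) (w y))}.
Proof. by move=> cu cw; apply: continuous_sum => i; exact: continuousM. Qed.

Lemma continuous_coords_mulmx {m n p} {A : R -> 'M[R]_(m, n)} {B : R -> 'M[R]_(n, p)} {x} :
  continuous_coords_at A x -> continuous_coords_at B x ->
  continuous_coords_at (fun y => A y *m B y) x.
Proof.
move=> cA cB i j.
have -> : (fun y => (A y *m B y) i j) = (fun y => \sum_k A y i k * B y k j).
  by apply/funext => y; rewrite mxE.
by apply: continuous_sum => k; exact: continuousM.
Qed.

Lemma continuous_coords_crossv {u w : R -> vec} {x} :
  continuous_coords_at u x -> continuous_coords_at w x ->
  continuous_coords_at (fun y => crossv (u y) (w y)) x.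
Proof.
move=> cu cw i j; rewrite ord1.
have cM k l : {for x, continuous (fun y => u y k 0 * w y l 0)} by exact: continuousM.
have -> : (fun y => crossv (u y) (w y) i 0) = (fun y =>
    if i == 0 :> nat then u y 1 0 * w y 2%:R 0 - u y 2%:R 0 * w y 1 0
    else if i == 1 :> nat then u y 2%:R 0 * w y 0 0 - u y 0 0 * w y 2%:R 0
    else u y 0 0 * w y 1 0 - u y 1 0 * w y 0 0).
  by apply/funext => y; rewrite mxE.
by case: eqP => _; [|case: eqP => _]; exact: continuousB (cM _ _) (cM _ _).
Qed.

Lemma continuous_segment_integrable (f : R -> R) (a b : R) : continuous f ->
  lebesgue_measure.-integrable `[a, b] (EFin \o f).
Proof.
move=> cf; apply: continuous_compact_integrable; first exact: segment_compact.
exact: continuous_subspaceT.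
Qed.

End Vector_calculus.

Section Hamiltonian_flow.
Context {R : realType}.
Local Notation vec := 'cV[R]_3.
Local Notation mat := 'M[R]_3.
Context {G Gam : R -> mat} {Om g : R -> vec}.
Local Notation H := (Ham G Gam Om g).

Definition dHam_p m (q p : vec) t (v : vec) :=
  (2 * m)^-1 * (dotv v (G t *m p) + dotv p (G t *m v)) - dotv (Om t) (crossv q v).

Definition dHam_q m (q p : vec) t (v : vec) :=
  - (m / 2) * (dotv v (Gam t *m q) + dotv q (Gam t *m v)) - dotv (Om t) (crossv v p)
  - m * dotv (g t) v.

Lemma Ham_shift_p m q p t v (h : R) :
  H m q (h *: v + p) t =
  H m q p t + h * dHam_p m q p t v + h ^+ 2 * ((2 * m)^-1 * dotv v (G t *m v)).
Proof. by rewrite /dHam_p; coordinates; ring. Qed.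

Lemma Ham_shift_q m q p t v (h : R) :
  H m (h *: v + q) p t =
  H m q p t + h * dHam_q m q p t v + h ^+ 2 * (- (m / 2) * dotv v (Gam t *m v)).
Proof. by rewrite /dHam_q; coordinates; ring. Qed.

Lemma hamilton_sol_velocity {m q p} (sol : hamilton_sol G Gam Om g m q p) t v :
  dotv ('D_1 q t) v = dHam_p m (q t) (p t) t v.
Proof.
have [_ [_ /(_ v) [dp_H _]]] := sol t.
have quad := is_derive_quadratic (fun p' => H m (q t) p' t) (Ham_shift_p m (q t) (p t) t v).
by rewrite -(derive_val (is_derive := dp_H)) (derive_val (is_derive := quad)).
Qed.

Lemma hamilton_sol_force {m q p} (sol : hamilton_sol G Gam Om g m q p) t v :
  dotv ('D_1 p t) v = - dHam_q m (q t) (p t) t v.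
Proof.
have [_ [_ /(_ v) [_ dq_H]]] := sol t.
have quad := is_derive_quadratic (fun q' => H m q' (p t) t) (Ham_shift_q m (q t) (p t) t v).
by rewrite -(derive_val (is_derive := quad)) (derive_val (is_derive := dq_H)) opprK.
Qed.

Definition lagrangian m (q p : R -> vec) t :=
  dHam_p m (q t) (p t) t (p t) - H m (q t) (p t) t.

Lemma action_lagrangian {m q p} s s' :
  hamilton_sol G Gam Om g m q p ->
  action G Gam Om g m q p s s' =
  \int[lebesgue_measure]_(t in `[s, s']) lagrangian m q p t.
Proof.
move=> sol; rewrite /action; congr Rintegral; apply/funext => t.
by rewrite /lagrangian dotvC (hamilton_sol_velocity sol).
Qed.

Definition pairing ma mb (qa pa qb pb : R -> vec) t :=
  2^-1 * dotv ((ma / mb) *: pb t + pa t) (qb t - qa t).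

(* With H_m(q, p) = m h(q, p/m), both sides are m_a times the same polynomial
   in q_a, p_a/m_a, q_b, p_b/m_b. *)
Lemma dHam_pairing ma mb (qa pa qb pb : vec) t : ma != 0 -> mb != 0 ->
  2^-1 * ((ma / mb) * - dHam_q mb qb pb t (qb - qa) - dHam_q ma qa pa t (qb - qa)
          + (dHam_p mb qb pb t ((ma / mb) *: pb + pa)
             - dHam_p ma qa pa t ((ma / mb) *: pb + pa)))
  = (ma / mb) * (dHam_p mb qb pb t pb - H mb qb pb t)
    - (dHam_p ma qa pa t pa - H ma qa pa t).
Proof.
by move=> ma0 mb0; rewrite /dHam_p /dHam_q; coordinates; field; rewrite ma0 mb0.
Qed.

Lemma is_derive_pairing {ma mb} {qa pa qb pb : R -> vec} :
  ma != 0 -> mb != 0 ->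
  hamilton_sol G Gam Om g ma qa pa -> hamilton_sol G Gam Om g mb qb pb ->
  forall t : R, is_derive t (1 : R) (pairing ma mb qa pa qb pb)
    (ma / mb * lagrangian mb qb pb t - lagrangian ma qa pa t).
Proof.
move=> ma0 mb0 sol_a sol_b t.
have [dqa [dpa _]] := sol_a t; have [dqb [dpb _]] := sol_b t.
have dmom := is_deriveD (is_deriveZ (ma / mb) (derivableP dpb)) (derivableP dpa).
have dsep := is_deriveB (derivableP dqb) (derivableP dqa).
have dW : is_derive t (1 : R) (pairing ma mb qa pa qb pb) (2^-1 *:
    (dotv ((ma / mb) *: 'D_1 pb t + 'D_1 pa t) (qb t - qa t)
     + dotv ((ma / mb) *: pb t + pa t) ('D_1 qb t - 'D_1 qa t)))
  := is_deriveZ (2^-1) (is_derive_dotv dmom dsep).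
apply: (is_derive_eq dW).
rewrite /GRing.scale /= dotvDl dotvZl (dotvC _ ('D_1 qb t - 'D_1 qa t)) dotvBl.
rewrite (hamilton_sol_velocity sol_a) (hamilton_sol_velocity sol_b).
rewrite (hamilton_sol_force sol_a) (hamilton_sol_force sol_b).
by rewrite -dHam_pairing.
Qed.

Hypotheses (cG : continuous G) (cGam : continuous Gam).
Hypotheses (cOm : continuous Om) (cg : continuous g).

Lemma continuous_Ham_along m {q p : R -> vec} {x} :
  continuous_coords_at q x -> continuous_coords_at p x ->
  {for x, continuous (fun y => H m (q y) (p y) y)}.
Proof.
rewrite /Ham => cq cp; have cst (c : R) : {for x, continuous (fun=> c)} by exact: cvg_cst.
have [cG' cGam'] := (continuous_coords (cG x), continuous_coords (cGam x)).
have [cOm' cg'] := (continuous_coords (cOm x), continuous_coords (cg x)).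
apply: continuousB; [apply: continuousB; [apply: continuousB|] |].
- exact: continuousM (cst _) (continuous_dotv cp (continuous_coords_mulmx cG' cp)).
- exact: continuousM (cst _) (continuous_dotv cq (continuous_coords_mulmx cGam' cq)).
- exact: continuous_dotv cOm' (continuous_coords_crossv cq cp).
- exact: continuousM (cst _) (continuous_dotv cg' cq).
Qed.

Lemma continuous_dHam_p_along m {q p v : R -> vec} {x} :
  continuous_coords_at q x -> continuous_coords_at p x -> continuous_coords_at v x ->
  {for x, continuous (fun y => dHam_p m (q y) (p y) y (v y))}.
Proof.
rewrite /dHam_p => cq cp cv.
have cst (c : R) : {for x, continuous (fun=> c)} by exact: cvg_cst.
have [cG' cOm'] := (continuous_coords (cG x), continuous_coords (cOm x)).
apply: continuousB; last exact: continuous_dotv cOm' (continuous_coords_crossv cq cv).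
apply: continuousM (cst _) _; apply: continuousD.
- exact: continuous_dotv cv (continuous_coords_mulmx cG' cp).
- exact: continuous_dotv cp (continuous_coords_mulmx cG' cv).
Qed.

Lemma continuous_lagrangian {m q p} :
  hamilton_sol G Gam Om g m q p -> continuous (lagrangian m q p).
Proof.
move=> sol x; have [dq [dp _]] := sol x.
have /derivable1_diffP/differentiable_continuous/continuous_coords cq := dq.
have /derivable1_diffP/differentiable_continuous/continuous_coords cp := dp.
rewrite /lagrangian.
exact: continuousB (continuous_dHam_p_along _ cq cp cp) (continuous_Ham_along _ cq cp).
Qed.

Lemma action_difference {ma mb} {qa pa qb pb : R -> vec} {s s' : R} :
  ma != 0 -> mb != 0 -> s < s' ->
  hamilton_sol G Gam Om g ma qa pa -> hamilton_sol G Gam Om g mb qb pb ->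
  (ma / mb) * action G Gam Om g mb qb pb s s' - action G Gam Om g ma qa pa s s' =
  pairing ma mb qa pa qb pb s' - pairing ma mb qa pa qb pb s.
Proof.
move=> ma0 mb0 ss' sol_a sol_b.
rewrite (action_lagrangian _ _ sol_a) (action_lagrangian _ _ sol_b).
have [cLa cLb] := (continuous_lagrangian sol_a, continuous_lagrangian sol_b).
have cLb' : continuous (fun t => ma / mb * lagrangian mb qb pb t).
  by move=> x; exact: continuousM (cvg_cst _) (cLb x).
have cL : continuous (fun t => ma / mb * lagrangian mb qb pb t - lagrangian ma qa pa t).
  by move=> x; exact: continuousB (cLb' x) (cLa x).
rewrite -RintegralZl ?continuous_segment_integrable //.
rewrite -RintegralB ?continuous_segment_integrable //.
have dW := is_derive_pairing ma0 mb0 sol_a sol_b.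
have W_ex x : derivable (pairing ma mb qa pa qb pb) x (1 : R).
  exact: (ex_derive (is_derive := dW x)).
have W_oo : derivable_oo_LRcontinuous (pairing ma mb qa pa qb pb) s s'.
  split; first by move=> x _; exact: W_ex.
  - exact/cvg_at_right_filter/differentiable_continuous/derivable1_diffP/W_ex.
  - exact/cvg_at_left_filter/differentiable_continuous/derivable1_diffP/W_ex.
have W' : {in `]s, s'[, forall x, derive1 (pairing ma mb qa pa qb pb) x =
                                  ma / mb * lagrangian mb qb pb x - lagrangian ma qa pa x}.
  by move=> x _; rewrite derive1E (derive_val (is_derive := dW x)).
by have := continuous_FTC2 ss' (continuous_subspaceT cL) W_oo W'; rewrite /Rintegral => ->.
Qed.

Definition kicked_segment m (q p : R -> vec) (s s' h : R) (k q0 p0 q1 p1 : vec) :=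
  0 < m /\ hamilton_sol G Gam Om g m q p /\
  q s = q0 /\ p s = p0 + h *: k /\ q1 = q s' /\ p1 = p s'.

Lemma segment_phase_difference {h ma mb oa ob fa fb s s' : R}
    {qta pta qtb ptb : R -> vec} {ka kb qa pa qb pb qa' pa' qb' pb' : vec} :
  h != 0 -> s < s' ->
  kicked_segment ma qta pta s s' h ka qa pa qa' pa' ->
  kicked_segment mb qtb ptb s s' h kb qb pb qb' pb' ->
  (action G Gam Om g mb qtb ptb s s' / h + dotv kb qb - ob * s - fb)
  - (action G Gam Om g ma qta pta s s' / h + dotv ka qa - oa * s - fa)
  = (dotv (kb - ka) (2^-1 *: (qa + qb)) - (ob - oa) * s - (fb - fa))
    + (mb / ma - 1) * (action G Gam Om g ma qta pta s s' / h
                       + dotv ((2 * h)^-1 *: pa') (qb' - qa')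
                       - dotv ((2 * h)^-1 *: (pa + h *: ka)) (qb - qa))
    + (dotv ((2 * h)^-1 *: (pa' + pb')) (qb' - qa')
       - dotv ((2 * h)^-1 *: (pa + pb)) (qb - qa)).
Proof.
move=> h0 ss' [ma_gt0 [sol_a [qa0 [pa0 [qa1 pa1]]]]].
move=> [mb_gt0 [sol_b [qb0 [pb0 [qb1 pb1]]]]].
have [ma0 mb0] := (lt0r_neq0 ma_gt0, lt0r_neq0 mb_gt0).
apply: (phase_step_regroup h0 ma0 mb0).
rewrite (action_difference ma0 mb0 ss' sol_a sol_b) /pairing.
by rewrite qa0 pa0 qb0 pb0 -qa1 -pa1 -qb1 -pb1.
Qed.

End Hamiltonian_flow.

Theorem theorem2 (R : realType) (hbar : R) (N : nat) (t : nat -> R)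
  (G Gam : R -> 'M[R]_3) (Om g : R -> 'cV[R]_3)
  (ma : nat -> R) (ka : nat -> 'cV[R]_3) (oma pha : nat -> R)
  (qa pa : nat -> 'cV[R]_3) (qta pta : nat -> R -> 'cV[R]_3)
  (mb : nat -> R) (kb : nat -> 'cV[R]_3) (omb phb : nat -> R)
  (qb pb : nat -> 'cV[R]_3) (qtb ptb : nat -> R -> 'cV[R]_3)
  (X Y : 'M[R[i]]_3) :
  (* standing assumptions on the external fields *)
  continuous G -> continuous Gam -> continuous Om -> continuous g ->
  (forall s, (G s)^T = G s /\ G s \in unitmx) ->
  (forall s, (Gam s)^T = Gam s) ->
  (* hbar > 0, N >= 1, t_1 < ... < t_N < t_{N+1} = t_D *)
  0 < hbar -> (1 <= N)%N ->
  (forall j, (1 <= j <= N)%N -> t j < t j.+1) ->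
  (* arm alpha: masses, classical trajectories and recursion *)
  (forall j, (1 <= j <= N)%N ->
     0 < ma j /\ hamilton_sol G Gam Om g (ma j) (qta j) (pta j) /\
     qta j (t j) = qa j /\ pta j (t j) = pa j + hbar *: ka j /\
     qa j.+1 = qta j (t j.+1) /\ pa j.+1 = pta j (t j.+1)) ->
  (* arm beta *)
  (forall j, (1 <= j <= N)%N ->
     0 < mb j /\ hamilton_sol G Gam Om g (mb j) (qtb j) (ptb j) /\
     qtb j (t j) = qb j /\ ptb j (t j) = pb j + hbar *: kb j /\
     qb j.+1 = qtb j (t j.+1) /\ pb j.+1 = ptb j (t j.+1)) ->
  X \in unitmx ->
  let Sa := fun j => action G Gam Om g (ma j) (qta j) (pta j) (t j) (t j.+1) in
  let Sb := fun j => action G Gam Om g (mb j) (qtb j) (ptb j) (t j) (t j.+1) in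
  let Z := ReYXinv X Y in
  forall q : 'cV[R]_3,
    Phi hbar N t mb kb omb phb qb pb Sb Z q
    - Phi hbar N t ma ka oma pha qa pa Sa Z q
  = dotv (pb N.+1 - pa N.+1) (q - 2^-1 *: (qa N.+1 + qb N.+1)) / hbar
    - dotv ((2 * hbar)^-1 *: (pa 1%N + pb 1%N)) (qb 1%N - qa 1%N)
    + \sum_(1 <= j < N.+1)
        (dotv (kb j - ka j) (2^-1 *: (qa j + qb j))
         - (omb j - oma j) * t j - (phb j - pha j))
    + \sum_(1 <= j < N.+1)
        ((mb j / ma j - 1) *
         (Sa j / hbar
          + dotv ((2 * hbar)^-1 *: pa j.+1) (qb j.+1 - qa j.+1)
          - dotv ((2 * hbar)^-1 *: (pa j + hbar *: ka j)) (qb j - qa j)))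
    + mb N / (2 * hbar) * dotv (q - qb N.+1) (Z *m (q - qb N.+1))
    - ma N / (2 * hbar) * dotv (q - qa N.+1) (Z *m (q - qa N.+1)).
Proof.
move=> cG cGam cOm cg _ _ hbar_gt0 _ t_lt arm_a arm_b _ Sa Sb Z q.
have hbar0 : hbar != 0 by rewrite gt_eqF.
rewrite /Phi; apply: phase_difference_regroup => //.
rewrite -sumrB; under eq_big_nat => j jN do
  rewrite (segment_phase_difference cG cGam cOm cg hbar0 (t_lt j jN) (arm_a j jN) (arm_b j jN)).
by rewrite big_split big_split /= telescope_sumr.
Qed.
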